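(* Assume the setting of the integrated dissipation equalities: $L>0$, $g>0$, $b\in\mathbb{R}$, $v,\theta\in C^2([0,L])$ with $v>0$, $p,q$ continuous on $[0,L]$ satisfying $$p+b\left(2vv'\theta'+v^2\theta''\right)+g\left(vv''-v^2(\theta')^2\right)=0,\qquad q+b\left(vv''-v^2(\theta')^2\right)-g\left(2vv'\theta'+v^2\theta''\right)=0,$$ and $\theta(0)=0$, $v(0)=1$, $\theta'(L)=0$, $v'(L)=0$. Suppose moreover $b\ge 0$ and $p(x)\le 0$, $q(x)\le 0$ for all $x\in[0,L]$. Then $v'(0)\le 0$ (voltage drop). Furthermore, $$\theta'(0)\le 0\iff \frac{b}{g}\int_0^Lp(x)\,dx\le\int_0^Lq(x)\,dx\ (\le 0).$$
   Context: Primes denote $d/dx$. $v$ is voltage amplitude, $\theta$ voltage phase, $p,q$ active/reactive power injections at position $x$ (nonpositive values mean consumption by loads), $g$ conductance and $b$ susceptance per unit length of a straight feeder with transformer at $x=0$. *)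

From Stdlib Require Import Reals.
From Coquelicot Require Import Coquelicot.
Open Scope R_scope.

Definition has_derive_on_interval (a b : R) (f : R -> R) (x l : R) : Prop :=
  forall eps : R, 0 < eps -> exists delta : R, 0 < delta /\
    forall y : R, a <= y <= b -> y <> x -> Rabs (y - x) < delta ->
      Rabs ((f y - f x) / (y - x) - l) < eps.

Definition continuous_on_interval_at (a b : R) (f : R -> R) (x : R) : Prop :=
  forall eps : R, 0 < eps -> exists delta : R, 0 < delta /\
    forall y : R, a <= y <= b -> Rabs (y - x) < delta ->
      Rabs (f y - f x) < eps.

Definition continuous_on_interval (a b : R) (f : R -> R) : Prop :=
  forall x, a <= x <= b -> continuous_on_interval_at a b f x.

Definition C2_on (a b : R) (f df ddf : R -> R) : Prop :=
  (forall x, a <= x <= b -> has_derive_on_interval a b f x (df x)) /\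
  (forall x, a <= x <= b -> has_derive_on_interval a b df x (ddf x)) /\
  continuous_on_interval a b ddf.

(* Write A := (v^2 θ')' = 2 v v' θ' + v^2 θ'' and B := v v'' - v^2 θ'^2.  The two
   power flow equations are linear in (A, B) with determinant b^2 + g^2, so
   (b^2 + g^2) A = g q - b p and (b^2 + g^2) B = -(g p + b q), which is >= 0 for
   consuming loads.  Hence (v v')' = v'^2 + B + v^2 θ'^2 >= 0, and v v' increases
   from v'(0) to v(L) v'(L) = 0.  Integrating A gives
   -(b^2 + g^2) θ'(0) = g ∫q - b ∫p, whose sign decides the sign of θ'(0). *)
From Stdlib Require Import Reals Lra.
From Coquelicot Require Import Coquelicot.
Open Scope R_scope.

Lemma flow_equations_flux (p q A B b g : R) :
  p + b * A + g * B = 0 -> q + b * B - g * A = 0 ->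
  (b ^ 2 + g ^ 2) * A = g * q - b * p.
Proof. intros Hp Hq; nra. Qed.

Lemma flow_equations_curvature_nonneg (p q A B b g : R) :
  0 <= b -> 0 < g -> p <= 0 -> q <= 0 ->
  p + b * A + g * B = 0 -> q + b * B - g * A = 0 -> 0 <= B.
Proof.
  intros hb hg hp hq Hp Hq.
  assert (HB : (b ^ 2 + g ^ 2) * B = - (g * p + b * q)) by nra.
  assert (hD : 0 < b ^ 2 + g ^ 2) by nra.
  apply (Rmult_le_reg_l (b ^ 2 + g ^ 2)); nra.
Qed.

(* Functions given on [a,b] are extended to R by constancy outside [a,b], so that
   the Stdlib and Coquelicot calculus on R applies to them. *)
Definition clamp (a b x : R) : R := Rmax a (Rmin b x).

Definition extend (a b : R) (f : R -> R) (x : R) : R := f (clamp a b x).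

Lemma clamp_in (a b x : R) : a <= b -> a <= clamp a b x <= b.
Proof. intros; unfold clamp, Rmax, Rmin; repeat destruct Rle_dec; lra. Qed.

Lemma clamp_id (a b x : R) : a <= x <= b -> clamp a b x = x.
Proof. intros; unfold clamp, Rmax, Rmin; repeat destruct Rle_dec; lra. Qed.

Lemma clamp_lipschitz (a b x y : R) :
  a <= b -> Rabs (clamp a b y - clamp a b x) <= Rabs (y - x).
Proof.
  intros; unfold clamp, Rmax, Rmin; repeat destruct Rle_dec;
  unfold Rabs; repeat destruct Rcase_abs; lra.
Qed.

Lemma extend_id (a b : R) (f : R -> R) (x : R) :
  a <= x <= b -> extend a b f x = f x.
Proof. intros; unfold extend; rewrite clamp_id; auto. Qed.

Lemma continuity_pt_extend (a b : R) (f : R -> R) (x : R) :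
  a <= b -> continuous_on_interval a b f -> continuity_pt (extend a b f) x.
Proof.
  intros hab hf eps he.
  destruct (hf (clamp a b x) (clamp_in a b x hab) eps he) as [d [hd H]].
  exists d; split; [exact hd|].
  intros y [_ hy]; simpl in *; unfold R_dist in *.
  apply H; [apply clamp_in; lra|].
  eapply Rle_lt_trans; [apply clamp_lipschitz; lra | exact hy].
Qed.

Lemma has_derive_on_interval_continuous (a b : R) (f : R -> R) (x l : R) :
  has_derive_on_interval a b f x l -> continuous_on_interval_at a b f x.
Proof.
  intros hd eps he.
  destruct (hd 1 Rlt_0_1) as [d [hd0 H]].
  assert (hK : 0 < Rabs l + 1) by (pose proof (Rabs_pos l); lra).
  set (r := Rmin d (eps / (Rabs l + 1))).
  assert (hr : 0 < r) by (apply Rmin_pos; [lra | apply Rdiv_lt_0_compat; lra]).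
  exists r; split; [exact hr|].
  intros y hy hyx.
  pose proof (Rmin_l d (eps / (Rabs l + 1))) as hrd.
  pose proof (Rmin_r d (eps / (Rabs l + 1))) as hre.
  destruct (Req_dec y x) as [->|hne].
  { rewrite Rminus_diag, Rabs_R0; lra. }
  specialize (H y hy hne ltac:(unfold r in *; lra)).
  set (Q := (f y - f x) / (y - x)) in H.
  assert (E : f y - f x = Q * (y - x)) by (unfold Q; field; lra).
  assert (HQ : Rabs Q <= Rabs l + 1).
  { replace Q with ((Q - l) + l) by ring.
    eapply Rle_trans; [apply Rabs_triang | lra]. }
  assert (Hyx : Rabs (y - x) * (Rabs l + 1) < eps).
  { apply (Rmult_lt_reg_r (/ (Rabs l + 1))); [apply Rinv_0_lt_compat; lra|].
    replace (Rabs (y - x) * (Rabs l + 1) * / (Rabs l + 1)) with (Rabs (y - x))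
      by (field; lra).
    unfold r in *; lra. }
  rewrite E, Rabs_mult.
  pose proof (Rabs_pos (y - x)); nra.
Qed.

Lemma derivable_pt_lim_extend (a b : R) (f : R -> R) (x l : R) :
  a < x < b -> has_derive_on_interval a b f x l ->
  derivable_pt_lim (extend a b f) x l.
Proof.
  intros hx hd eps he.
  destruct (hd eps he) as [d [hd0 H]].
  set (r := Rmin d (Rmin (x - a) (b - x))).
  assert (hr : 0 < r) by (repeat apply Rmin_pos; lra).
  exists (mkposreal r hr); intros h hh0 hh; simpl in hh.
  pose proof (Rmin_l d (Rmin (x - a) (b - x))).
  pose proof (Rmin_r d (Rmin (x - a) (b - x))).
  pose proof (Rmin_l (x - a) (b - x)). pose proof (Rmin_r (x - a) (b - x)).
  assert (hy : a <= x + h <= b).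
  { revert hh; unfold r, Rabs; destruct Rcase_abs; lra. }
  rewrite !extend_id by lra.
  specialize (H (x + h) hy).
  replace (x + h - x) with h in H by ring.
  apply H; [lra | unfold r in *; lra].
Qed.

Lemma C2_on_continuity_pt (a b : R) (f df ddf : R -> R) (x : R) :
  a <= b -> C2_on a b f df ddf ->
  continuity_pt (extend a b f) x /\ continuity_pt (extend a b df) x.
Proof.
  intros hab [hf [hdf _]]; split; apply continuity_pt_extend; auto;
  intros y hy; eapply has_derive_on_interval_continuous; eauto.
Qed.

Lemma C2_on_derivable_pt_lim (a b : R) (f df ddf : R -> R) (x : R) :
  a < x < b -> C2_on a b f df ddf ->
  derivable_pt_lim (extend a b f) x (df x) /\
  derivable_pt_lim (extend a b df) x (ddf x).
Proof.
  intros hx [hf [hdf _]]; split; apply derivable_pt_lim_extend; auto;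
  [apply hf | apply hdf]; lra.
Qed.

Lemma increment_le_of_derive_nonneg (a b : R) (F dF : R -> R) :
  a < b ->
  (forall x, a < x < b -> derivable_pt_lim F x (dF x)) ->
  (forall x, a <= x <= b -> continuity_pt F x) ->
  (forall x, a <= x <= b -> 0 <= dF x) -> F a <= F b.
Proof.
  intros hab hd hc hpos.
  destruct (MVT_gen F a b dF) as [c [hc1 hc2]];
    rewrite ?Rmin_left, ?Rmax_right in * by lra.
  - intros x hx; apply is_derive_Reals; auto.
  - exact hc.
  - pose proof (hpos c hc1); nra.
Qed.

Lemma increment_eq_of_derive_zero (a b : R) (F : R -> R) :
  a < b ->
  (forall x, a < x < b -> derivable_pt_lim F x 0) ->
  (forall x, a <= x <= b -> continuity_pt F x) -> F a = F b.
Proof.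
  intros hab hd hc.
  destruct (MVT_gen F a b (fun _ => 0)) as [c [_ hc2]];
    rewrite ?Rmin_left, ?Rmax_right in * by lra.
  - intros x hx; apply is_derive_Reals; auto.
  - exact hc.
  - lra.
Qed.

Lemma derivable_pt_lim_RInt (f : R -> R) (a x : R) :
  (forall y, continuity_pt f y) ->
  derivable_pt_lim (fun t => RInt f a t) x (f x).
Proof.
  intros hf; apply is_derive_Reals.
  assert (hf' : forall y, continuous f y) by (intro; apply continuity_pt_filterlim, hf).
  apply (is_derive_RInt f (fun t => RInt f a t) a); [|apply hf'].
  apply filter_forall; intro t; apply (@RInt_correct R_CompleteNormedModule).
  apply (@ex_RInt_continuous R_CompleteNormedModule); auto.
Qed.

Lemma RInt_extend (a b : R) (f : R -> R) :
  a <= b -> RInt (extend a b f) a b = RInt f a b.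
Proof.
  intros hab; apply RInt_ext; intros x hx.
  rewrite Rmin_left, Rmax_right in hx by lra; apply extend_id; lra.
Qed.

Section Feeder.

Variables (L g b : R) (v dv ddv th dth ddth p q : R -> R).
Hypotheses (hL : 0 < L) (hg : 0 < g)
  (hv : C2_on 0 L v dv ddv) (hth : C2_on 0 L th dth ddth)
  (hp : continuous_on_interval 0 L p) (hq : continuous_on_interval 0 L q)
  (eqp : forall x, 0 <= x <= L ->
     p x + b * (2 * v x * dv x * dth x + (v x)^2 * ddth x)
         + g * (v x * ddv x - (v x)^2 * (dth x)^2) = 0)
  (eqq : forall x, 0 <= x <= L ->
     q x + b * (v x * ddv x - (v x)^2 * (dth x)^2)
         - g * (2 * v x * dv x * dth x + (v x)^2 * ddth x) = 0)
  (bc_v0 : v 0 = 1) (bc_dthL : dth L = 0) (bc_dvL : dv L = 0).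

Let V := extend 0 L v.
Let dV := extend 0 L dv.
Let dTh := extend 0 L dth.

Lemma feeder_voltage_drop :
  0 <= b -> (forall x, 0 <= x <= L -> p x <= 0) ->
  (forall x, 0 <= x <= L -> q x <= 0) -> dv 0 <= 0.
Proof.
  intros hb hpneg hqneg.
  assert (hmono : V 0 * dV 0 <= V L * dV L).
  { apply (increment_le_of_derive_nonneg 0 L (fun x => V x * dV x)
             (fun x => dv x * dv x + v x * ddv x) hL).
    - intros x hx; destruct (C2_on_derivable_pt_lim 0 L v dv ddv x hx hv) as [Dv Ddv].
      pose proof (derivable_pt_lim_mult _ _ _ _ _ Dv Ddv) as H.
      unfold V, dV; rewrite !extend_id in H by lra; exact H.
    - intros x _; destruct (C2_on_continuity_pt 0 L v dv ddv x ltac:(lra) hv).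
      apply (continuity_pt_mult V dV); auto.
    - intros x hx.
      pose proof (flow_equations_curvature_nonneg _ _ _ _ _ _ hb hg
                    (hpneg x hx) (hqneg x hx) (eqp x hx) (eqq x hx)).
      nra. }
  unfold V, dV in hmono; rewrite !extend_id in hmono by lra.
  rewrite bc_v0, bc_dvL in hmono; lra.
Qed.

Lemma feeder_flux_derivative (x : R) : 0 < x < L ->
  derivable_pt_lim (fun y => (b ^ 2 + g ^ 2) * (V y * V y * dTh y)) x
    (g * q x - b * p x).
Proof.
  intros hx.
  destruct (C2_on_derivable_pt_lim 0 L v dv ddv x hx hv) as [Dv _].
  destruct (C2_on_derivable_pt_lim 0 L th dth ddth x hx hth) as [_ Ddth].
  pose proof (derivable_pt_lim_scal _ (b ^ 2 + g ^ 2) _ _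
    (derivable_pt_lim_mult _ _ _ _ _ (derivable_pt_lim_mult _ _ _ _ _ Dv Dv) Ddth)) as H.
  unfold V, dTh, mult_fct in H; rewrite !extend_id in H by lra.
  rewrite <- (flow_equations_flux _ _ _ _ _ _ (eqp x ltac:(lra)) (eqq x ltac:(lra))).
  replace (2 * v x * dv x * dth x + v x ^ 2 * ddth x)
    with ((dv x * v x + v x * dv x) * dth x + v x * v x * ddth x) by ring.
  exact H.
Qed.

Lemma feeder_flux_continuity_pt (x : R) :
  continuity_pt (fun y => (b ^ 2 + g ^ 2) * (V y * V y * dTh y)) x.
Proof.
  destruct (C2_on_continuity_pt 0 L v dv ddv x ltac:(lra) hv) as [Cv _].
  destruct (C2_on_continuity_pt 0 L th dth ddth x ltac:(lra) hth) as [_ Cdth].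
  apply (continuity_pt_scal (fun y => V y * V y * dTh y)).
  apply (continuity_pt_mult (fun y => V y * V y)); [|exact Cdth].
  apply continuity_pt_mult; exact Cv.
Qed.

Lemma feeder_angle_flux :
  (b ^ 2 + g ^ 2) * dth 0 = b * RInt p 0 L - g * RInt q 0 L.
Proof.
  set (Ip := fun t => RInt (extend 0 L p) 0 t).
  set (Iq := fun t => RInt (extend 0 L q) 0 t).
  assert (hDp : forall x, derivable_pt_lim Ip x (extend 0 L p x)).
  { intro; apply derivable_pt_lim_RInt; intro; apply continuity_pt_extend; [lra | exact hp]. }
  assert (hDq : forall x, derivable_pt_lim Iq x (extend 0 L q x)).
  { intro; apply derivable_pt_lim_RInt; intro; apply continuity_pt_extend; [lra | exact hq]. }
  set (Flux := fun y => (b ^ 2 + g ^ 2) * (V y * V y * dTh y)).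
  set (F := fun x => Flux x - (g * Iq x - b * Ip x)).
  assert (hconst : F 0 = F L).
  { apply increment_eq_of_derive_zero; [exact hL | |].
    - intros x hx.
      pose proof (derivable_pt_lim_minus _ _ _ _ _ (feeder_flux_derivative x hx)
        (derivable_pt_lim_minus _ _ _ _ _
           (derivable_pt_lim_scal _ g _ _ (hDq x)) (derivable_pt_lim_scal _ b _ _ (hDp x))))
        as H.
      rewrite !extend_id, Rminus_diag in H by lra; exact H.
    - intros x _.
      apply (continuity_pt_minus Flux); [apply feeder_flux_continuity_pt|].
      apply (continuity_pt_minus (fun x => g * Iq x)); apply continuity_pt_scal;
        apply derivable_continuous_pt; eexists; [apply hDq | apply hDp]. }
  unfold F, Flux, Ip, Iq, V, dTh in hconst.
  assert (hpoint : forall f, RInt f 0 0 = 0) by (intro f; exact (RInt_point 0 f)).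
  rewrite !hpoint, !RInt_extend, !extend_id, bc_v0, bc_dthL in hconst by lra.
  lra.
Qed.

End Feeder.

Theorem mainTheorem5
  (L g b : R) (v dv ddv th dth ddth p q : R -> R)
  (hL : 0 < L) (hg : 0 < g)
  (hv : C2_on 0 L v dv ddv) (hth : C2_on 0 L th dth ddth)
  (hvpos : forall x, 0 <= x <= L -> 0 < v x)
  (hp : continuous_on_interval 0 L p) (hq : continuous_on_interval 0 L q)
  (eqp : forall x, 0 <= x <= L ->
     p x + b * (2 * v x * dv x * dth x + (v x)^2 * ddth x)
         + g * (v x * ddv x - (v x)^2 * (dth x)^2) = 0)
  (eqq : forall x, 0 <= x <= L ->
     q x + b * (v x * ddv x - (v x)^2 * (dth x)^2)
         - g * (2 * v x * dv x * dth x + (v x)^2 * ddth x) = 0)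
  (bc_th0 : th 0 = 0) (bc_v0 : v 0 = 1)
  (bc_dthL : dth L = 0) (bc_dvL : dv L = 0)
  (hb : 0 <= b)
  (hpneg : forall x, 0 <= x <= L -> p x <= 0)
  (hqneg : forall x, 0 <= x <= L -> q x <= 0) :
  dv 0 <= 0 /\
  (dth 0 <= 0 <-> b / g * RInt p 0 L <= RInt q 0 L).
Proof.
  split.
  { exact (feeder_voltage_drop L g b v dv ddv dth ddth p q
             hL hg hv eqp eqq bc_v0 bc_dvL hb hpneg hqneg). }
  pose proof (feeder_angle_flux L g b v dv ddv th dth ddth p q
                hL hv hth hp hq eqp eqq bc_v0 bc_dthL) as hflux.
  assert (hD : 0 < b ^ 2 + g ^ 2) by nra.
  replace (b / g * RInt p 0 L) with (b * RInt p 0 L / g) by (field; lra).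
  rewrite Rle_div_l by lra.
  split; intro H; nra.
Qed.
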